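(* The variety of superintegrable systems $\mathcal V\subset\mathbb P^9$ (points satisfying the five Plücker relations and the superintegrability conditions (SIC)) coincides with the subvariety of $\mathbb P^9$ defined by the polynomial identities $A_zB_w=D_zD_w-DD_{zw}$, $A_zD_{ww}=D_wD_{zz}-DD_{zzw}$, $A_zD_{wwz}=D_{zz}D_{zw}-D_zD_{zzw}$, $B_wD_{zz}=D_zD_{ww}-DD_{wwz}$, $B_wD_{zzw}=D_{zw}D_{ww}-D_wD_{wwz}$, together with $A_zD_w^2=2DD_wD_{zz}-\tfrac32D^2D_{zzw}-D_wD_z^2+DD_zD_{zw}$ and $B_wD_z^2=2DD_zD_{ww}-\tfrac32D^2D_{wwz}-D_zD_w^2+DD_wD_{zw}$.
   Context: Homogeneous coordinates $a_{ij}$ ($i,j\ge0$, $i+j\le3$) on $\mathbb P^9$, which correspond to skew-symmetric $5\times5$ matrices with rows $(0,a_{30},a_{20},a_{10},a_{00})$, $(\cdot,0,a_{21},a_{11},a_{01})$, $(\cdot,\cdot,0,a_{12},a_{02})$, $(\cdot,\cdot,\cdot,0,a_{03})$. Define $D(z,w)=\sum_{0\le i,j\le2,(i,j)\ne(2,2)}a_{ij}z^iw^j$, $A_z(w)=a_{21}w^2+2a_{20}w+a_{30}$, $B_w(z)=a_{12}z^2+2a_{02}z+a_{03}$ (names of polynomials; subscripts on $D$ are partial derivatives). Plücker relations: $a_{03}a_{21}-a_{02}a_{11}+a_{01}a_{12}=0$, $a_{03}a_{20}-a_{02}a_{10}+a_{00}a_{12}=0$, $a_{03}a_{30}-a_{01}a_{10}+a_{00}a_{11}=0$,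 $a_{02}a_{30}-a_{01}a_{20}+a_{00}a_{21}=0$, $a_{12}a_{30}-a_{11}a_{20}+a_{10}a_{21}=0$. (SIC): the polynomial identities $3A_zDD_{ww}-2A_zB_wD_z-2A_zD_w^2+DD_wD_{zz}=0$, $3B_wDD_{zz}-2A_zB_wD_w-2B_wD_z^2+DD_zD_{ww}=0$, $2D^2D_{zz}D_{ww}-B_wDD_zD_{zz}-A_zDD_wD_{ww}-A_zB_wD_zD_w+A_z^2B_w^2=0$. All identities are in $\mathbb C[z,w]$, each coefficient giving a homogeneous equation in the $a_{ij}$. *)

From HB Require Import structures.
From mathcomp Require Import all_boot all_order all_algebra all_field.
From mathcomp Require Import mpoly.
Set Implicit Arguments. Unset Strict Implicit. Unset Printing Implicit Defensive.
Import Order.TTheory GRing.Theory Num.Theory.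
Local Open Scope ring_scope.

(* Complex numbers: algC (algebraic closure of Q, an algebraically closed field of characteristic 0). *)
(* Homogeneous coordinates: a i j stands for a_{ij}; only i,j >= 0, i+j <= 3 are used. *)
Definition coords := nat -> nat -> algC.

Notation P := {mpoly algC[2]}.
Definition vz : 'I_2 := ord0.
Definition vw : 'I_2 := ord_max.
Definition Z : P := 'X_vz.
Definition W : P := 'X_vw.
Definition dz (p : P) : P := mderiv vz p.
Definition dw (p : P) : P := mderiv vw p.

Definition Dpol (a : coords) : P :=
  \sum_(i < 3) \sum_(j < 3 | ~~ ((i == 2%N :> nat) && (j == 2%N :> nat)))
     (a i j)%:MP * Z ^+ i * W ^+ j.

Definition Apol (a : coords) : P := (a 2 1)%:MP * W ^+ 2 + 2%:R * (a 2 0)%:MP * W + (a 3 0)%:MP.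
Definition Bpol (a : coords) : P := (a 1 2)%:MP * Z ^+ 2 + 2%:R * (a 0 2)%:MP * Z + (a 0 3)%:MP.

Definition plucker (a : coords) : Prop :=
  [/\ a 0 3 * a 2 1 - a 0 2 * a 1 1 + a 0 1 * a 1 2 = 0,
      a 0 3 * a 2 0 - a 0 2 * a 1 0 + a 0 0 * a 1 2 = 0,
      a 0 3 * a 3 0 - a 0 1 * a 1 0 + a 0 0 * a 1 1 = 0,
      a 0 2 * a 3 0 - a 0 1 * a 2 0 + a 0 0 * a 2 1 = 0 &
      a 1 2 * a 3 0 - a 1 1 * a 2 0 + a 1 0 * a 2 1 = 0].

Definition SIC (a : coords) : Prop :=
  let D := Dpol a in let A := Apol a in let B := Bpol a in
  [/\ 3%:R * A * D * dw (dw D) - 2%:R * A * B * dz D - 2%:R * A * (dw D) ^+ 2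
        + D * dw D * dz (dz D) = 0,
      3%:R * B * D * dz (dz D) - 2%:R * A * B * dw D - 2%:R * B * (dz D) ^+ 2
        + D * dz D * dw (dw D) = 0 &
      2%:R * D ^+ 2 * dz (dz D) * dw (dw D) - B * D * dz D * dz (dz D)
        - A * D * dw D * dw (dw D) - A * B * dz D * dw D + A ^+ 2 * B ^+ 2 = 0].

Definition cor38_eqs (a : coords) : Prop :=
  let D := Dpol a in let A := Apol a in let B := Bpol a in
  let Dz := dz D in let Dw := dw D in
  let Dzz := dz Dz in let Dww := dw Dw in let Dzw := dw Dz in
  let Dzzw := dw Dzz in let Dwwz := dz Dww in
  [/\ A * B = Dz * Dw - D * Dzw,
      A * Dww = Dw * Dzz - D * Dzzw,
      A * Dwwz = Dzz * Dzw - Dz * Dzzw,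
      B * Dzz = Dz * Dww - D * Dwwz &
      B * Dzzw = Dzw * Dww - Dw * Dwwz] /\
  (A * Dw ^+ 2 = 2%:R * D * Dw * Dzz - (3%:R / 2%:R)%:MP * D ^+ 2 * Dzzw
                    - Dw * Dz ^+ 2 + D * Dz * Dzw /\
      B * Dz ^+ 2 = 2%:R * D * Dz * Dww - (3%:R / 2%:R)%:MP * D ^+ 2 * Dwwz
                    - Dz * Dw ^+ 2 + D * Dw * Dzw).

From mathcomp Require Import all_boot all_order all_algebra all_field.
From mathcomp Require Import mpoly ring.

(* The defect of each of the first five identities is a polynomial in z, w whose
   coefficients are, up to a factor 2, the Pfaffians of the Pluecker relations,
   so these identities are equivalent to the Pluecker relations.  Modulo them,
   the first two conditions (SIC) are -2 times the defects of the last two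
   identities, and the third one is a combination of the first, second and
   fourth identities and of the w-derivative of the sixth. *)

Set Implicit Arguments.
Unset Strict Implicit.
Unset Printing Implicit Defensive.

Import GRing.Theory Num.Theory.
Local Open Scope ring_scope.

Section SuperintegrabilityConditions.

Variables (R : comPzRingType) (c : R).
Hypothesis two_c : 2%:R * c = 3%:R.

Lemma mulr2_eq0 (x : R) : 2%:R * x = 0 -> x = 0.
Proof.
move=> x2; have inv2 : (c - 1) * 2%:R = 1.
  have -> : (c - 1) * 2%:R = 2%:R * c - 3%:R + 1 by ring.
  by rewrite two_c subrr add0r.
by rewrite -[x]mul1r -inv2 -mulrA x2 mulr0.
Qed.

Lemma sic1_iff_eq6 (A B D Dz Dw Dzz Dww Dzw Dzzw : R) :
  A * B = Dz * Dw - D * Dzw -> A * Dww = Dw * Dzz - D * Dzzw ->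
  3%:R * A * D * Dww - 2%:R * A * B * Dz - 2%:R * A * Dw ^+ 2 + D * Dw * Dzz = 0 <->
  A * Dw ^+ 2 = 2%:R * D * Dw * Dzz - c * D ^+ 2 * Dzzw - Dw * Dz ^+ 2 + D * Dz * Dzw.
Proof.
move=> eAB eADww; set S := (X in X = 0 <-> _).
set E := (X in _ <-> X = _); set F := (X in _ <-> _ = X).
have SE : S + 2%:R * (E - F) = 0.
  transitivity (3%:R * D * (A * Dww - (Dw * Dzz - D * Dzzw))
    - 2%:R * Dz * (A * B - (Dz * Dw - D * Dzw)) + (2%:R * c - 3%:R) * D ^+ 2 * Dzzw).
    by rewrite /S /E /F; ring.
  by rewrite eAB eADww two_c !subrr !(mulr0, mul0r, subr0, addr0).
split=> [S0 | EF]; last by rewrite EF subrr mulr0 addr0 in SE.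
by apply/eqP; rewrite -subr_eq0; apply/eqP/mulr2_eq0; rewrite -SE S0 add0r.
Qed.

Lemma sic2_iff_eq7 (A B D Dz Dw Dzz Dww Dzw Dwwz : R) :
  A * B = Dz * Dw - D * Dzw -> B * Dzz = Dz * Dww - D * Dwwz ->
  3%:R * B * D * Dzz - 2%:R * A * B * Dw - 2%:R * B * Dz ^+ 2 + D * Dz * Dww = 0 <->
  B * Dz ^+ 2 = 2%:R * D * Dz * Dww - c * D ^+ 2 * Dwwz - Dz * Dw ^+ 2 + D * Dw * Dzw.
Proof.
move=> eAB eBDzz; have -> : 2%:R * A * B * Dw = 2%:R * B * A * Dw.
  by rewrite -!mulrA (mulrCA A).
by apply: (@sic1_iff_eq6 B A D Dw Dz Dww Dzz Dzw Dwwz); rewrite // mulrC eAB mulrC.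
Qed.

(* The last hypothesis is the w-derivative of the sixth identity with c = 3/2,
   computed for a derivation with [d_w A = D_zz] and [d_w D_zzw = 0]. *)
Lemma sic3_of_eqs (A B D Dz Dw Dzz Dww Dzw Dzzw Dwwz : R) :
  A * B = Dz * Dw - D * Dzw -> A * Dww = Dw * Dzz - D * Dzzw ->
  B * Dzz = Dz * Dww - D * Dwwz ->
  2%:R * A * Dw * Dww - Dw ^+ 2 * Dzz - 2%:R * D * Dzz * Dww + D * Dw * Dzzw
    + Dz ^+ 2 * Dww + Dz * Dw * Dzw - D * Dzw ^+ 2 - D * Dz * Dwwz = 0 ->
  2%:R * D ^+ 2 * Dzz * Dww - B * D * Dz * Dzz - A * D * Dw * Dww
    - A * B * Dz * Dw + A ^+ 2 * B ^+ 2 = 0.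
Proof.
move=> eAB eADww eBDzz; set dE := (X in X = 0 -> _) => dE0.
transitivity (D * (2%:R * Dw * (A * Dww - (Dw * Dzz - D * Dzzw)) - dE)
   + (A * B - D * Dzw) * (A * B - (Dz * Dw - D * Dzw))
   - D * Dw * (A * Dww - (Dw * Dzz - D * Dzzw))
   - D * Dz * (B * Dzz - (Dz * Dww - D * Dwwz))).
  by rewrite /dE; ring.
by rewrite eAB eADww eBDzz dE0 !subrr !(mulr0, subr0, addr0).
Qed.

End SuperintegrabilityConditions.

Lemma mderiv_nat (R : nzRingType) n (i : 'I_n) k : mderiv i (k%:R : {mpoly R[n]}) = 0.
Proof. by rewrite -mpolyC_nat mderivC. Qed.

Lemma mderiv_X (R : nzRingType) n (i j : 'I_n) :
  mderiv i ('X_j : {mpoly R[n]}) = (i == j)%:R.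
Proof.
rewrite mderivX mnm1E; have [->|_] := eqVneq i j; last by rewrite scale0r.
have -> : (U_(j) - U_(j) = 0)%MM by apply/mnmP=> k; rewrite !mnmE subnn.
by rewrite scale1r mpolyX0.
Qed.

Ltac mderiv_simpl :=
  rewrite /dz /dw
    ?(mderivD, mderivB, mderivN, mderivM, mderivC, mderiv_nat, mderiv_X) ?eqxx /=.

Section ExplicitDerivatives.
Variable a : coords.
Local Notation ca i j := ((a i j)%:MP : P).

Lemma Dpol_expand : Dpol a = ca 0 0 + ca 0 1 * W + ca 0 2 * W ^+ 2 + ca 1 0 * Z
  + ca 1 1 * Z * W + ca 1 2 * Z * W ^+ 2 + ca 2 0 * Z ^+ 2 + ca 2 1 * Z ^+ 2 * W.
Proof.
rewrite /Dpol; under eq_bigr do rewrite big_mkcond.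
by rewrite !big_ord_recr !big_ord0 /=; ring.
Qed.

Lemma dz_Dpol : dz (Dpol a) =
  ca 1 0 + ca 1 1 * W + ca 1 2 * W ^+ 2 + 2%:R * ca 2 0 * Z + 2%:R * ca 2 1 * Z * W.
Proof. by rewrite Dpol_expand; mderiv_simpl; ring. Qed.

Lemma dw_Dpol : dw (Dpol a) =
  ca 0 1 + 2%:R * ca 0 2 * W + ca 1 1 * Z + 2%:R * ca 1 2 * Z * W + ca 2 1 * Z ^+ 2.
Proof. by rewrite Dpol_expand; mderiv_simpl; ring. Qed.

Lemma dzz_Dpol : dz (dz (Dpol a)) = 2%:R * ca 2 0 + 2%:R * ca 2 1 * W.
Proof. by rewrite dz_Dpol; mderiv_simpl; ring. Qed.

Lemma dzw_Dpol : dw (dz (Dpol a)) = ca 1 1 + 2%:R * ca 1 2 * W + 2%:R * ca 2 1 * Z.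
Proof. by rewrite dz_Dpol; mderiv_simpl; ring. Qed.

Lemma dww_Dpol : dw (dw (Dpol a)) = 2%:R * ca 0 2 + 2%:R * ca 1 2 * Z.
Proof. by rewrite dw_Dpol; mderiv_simpl; ring. Qed.

Lemma dzzw_Dpol : dw (dz (dz (Dpol a))) = 2%:R * ca 2 1.
Proof. by rewrite dzz_Dpol; mderiv_simpl; ring. Qed.

Lemma dwwz_Dpol : dz (dw (dw (Dpol a))) = 2%:R * ca 1 2.
Proof. by rewrite dww_Dpol; mderiv_simpl; ring. Qed.

Lemma dw_Apol : dw (Apol a) = dz (dz (Dpol a)).
Proof. by rewrite dzz_Dpol /Apol; mderiv_simpl; ring. Qed.

End ExplicitDerivatives.

(* [pfaffian a k] is the Pfaffian of the 4x4 principal submatrix obtained by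
   deleting row and column [k] (numbered from 0) of the skew-symmetric 5x5
   matrix of [a]. *)
Definition pfaffian (a : coords) (k : nat) : algC :=
  match k with
  | 0 => a 0 3 * a 2 1 - a 0 2 * a 1 1 + a 0 1 * a 1 2
  | 1 => a 0 3 * a 2 0 - a 0 2 * a 1 0 + a 0 0 * a 1 2
  | 2 => a 0 3 * a 3 0 - a 0 1 * a 1 0 + a 0 0 * a 1 1
  | 3 => a 0 2 * a 3 0 - a 0 1 * a 2 0 + a 0 0 * a 2 1
  | 4 => a 1 2 * a 3 0 - a 1 1 * a 2 0 + a 1 0 * a 2 1
  | _ => 0
  end.

Lemma pluckerE (a : coords) : plucker a <->
  [/\ pfaffian a 0 = 0, pfaffian a 1 = 0, pfaffian a 2 = 0,
       pfaffian a 3 = 0 & pfaffian a 4 = 0].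
Proof. exact: iff_refl. Qed.

Lemma mulr2_mpolyC_eq0 (x : algC) : 2%:R * (x%:MP : P) = 0 -> x = 0.
Proof.
by rewrite -mpolyC_nat -rmorphM => /eqP; rewrite mpolyC_eq0 mulf_eq0 pnatr_eq0 => /eqP.
Qed.

Local Notation three_halves := ((3%:R / 2%:R : algC)%:MP : P).

Lemma mulr2_three_halves : 2%:R * three_halves = 3%:R.
Proof. by rewrite -!mpolyC_nat -rmorphM mulrC divfK // pnatr_eq0. Qed.

Ltac expand_Dpol := rewrite ?dzzw_Dpol ?dwwz_Dpol ?dzz_Dpol ?dzw_Dpol ?dww_Dpol
  ?dz_Dpol ?dw_Dpol ?Dpol_expand /Apol /Bpol /=.

Section Identities.
Variable a : coords.
Local Notation D := (Dpol a).
Local Notation A := (Apol a).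
Local Notation B := (Bpol a).
Local Notation Dz := (dz D).
Local Notation Dw := (dw D).
Local Notation Dzz := (dz Dz).
Local Notation Dww := (dw Dw).
Local Notation Dzw := (dw Dz).
Local Notation Dzzw := (dw Dzz).
Local Notation Dwwz := (dz Dww).
Local Notation pf k := ((pfaffian a k)%:MP : P).

Lemma ApolBpol_defect : A * B - (Dz * Dw - D * Dzw) =
  pf 2 + 2%:R * pf 1 * W + pf 0 * W ^+ 2 + 2%:R * pf 3 * Z + pf 4 * Z ^+ 2.
Proof. by expand_Dpol; ring. Qed.

Lemma ApolDww_defect : A * Dww - (Dw * Dzz - D * Dzzw) = 2%:R * pf 3 + 2%:R * pf 4 * Z.
Proof. by expand_Dpol; ring. Qed.

Lemma ApolDwwz_defect : A * Dwwz - (Dzz * Dzw - Dz * Dzzw) = 2%:R * pf 4.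
Proof. by expand_Dpol; ring. Qed.

Lemma BpolDzz_defect : B * Dzz - (Dz * Dww - D * Dwwz) = 2%:R * pf 1 + 2%:R * pf 0 * W.
Proof. by expand_Dpol; ring. Qed.

Lemma BpolDzzw_defect : B * Dzzw - (Dzw * Dww - Dw * Dwwz) = 2%:R * pf 0.
Proof. by expand_Dpol; ring. Qed.

Lemma plucker_iff_eqs15 : plucker a <->
  [/\ A * B = Dz * Dw - D * Dzw, A * Dww = Dw * Dzz - D * Dzzw,
      A * Dwwz = Dzz * Dzw - Dz * Dzzw, B * Dzz = Dz * Dww - D * Dwwz &
      B * Dzzw = Dzw * Dww - Dw * Dwwz].
Proof.
split=> [/pluckerE[p0 p1 p2 p3 p4] | [eAB eADww eADwwz eBDzz eBDzzw]].
  by split; apply/eqP; rewrite -subr_eq0;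
    rewrite ?ApolBpol_defect ?ApolDww_defect ?ApolDwwz_defect ?BpolDzz_defect
      ?BpolDzzw_defect ?p0 ?p1 ?p2 ?p3 ?p4 !rmorph0 !(mulr0, mul0r, addr0).
have p0 : pfaffian a 0 = 0.
  by apply: mulr2_mpolyC_eq0; rewrite -BpolDzzw_defect eBDzzw subrr.
have p4 : pfaffian a 4 = 0.
  by apply: mulr2_mpolyC_eq0; rewrite -ApolDwwz_defect eADwwz subrr.
have p3 : pfaffian a 3 = 0.
  apply: mulr2_mpolyC_eq0; have := ApolDww_defect.
  by rewrite eADww subrr p4 rmorph0 mulr0 mul0r addr0.
have p1 : pfaffian a 1 = 0.
  apply: mulr2_mpolyC_eq0; have := BpolDzz_defect.
  by rewrite eBDzz subrr p0 rmorph0 mulr0 mul0r addr0.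
have p2 : pfaffian a 2 = 0.
  have := ApolBpol_defect; rewrite eAB subrr p0 p1 p3 p4 rmorph0 !(mulr0, mul0r, addr0).
  by move/esym/eqP; rewrite mpolyC_eq0 => /eqP.
by apply/pluckerE.
Qed.

Local Notation c := three_halves.

Lemma dw_eq6_defect :
  dw (A * Dw ^+ 2 - (2%:R * D * Dw * Dzz - c * D ^+ 2 * Dzzw - Dw * Dz ^+ 2 + D * Dz * Dzw)) =
  2%:R * A * Dw * Dww - Dw ^+ 2 * Dzz - 2%:R * D * Dzz * Dww + D * Dw * Dzzw
    + Dz ^+ 2 * Dww + Dz * Dw * Dzw - D * Dzw ^+ 2 - D * Dz * Dwwz.
Proof.
apply/eqP; rewrite -subr_eq0; apply/eqP.
transitivity ((2%:R * c - 3%:R) * (D * Dw * Dzzw)); last first.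
  by rewrite mulr2_three_halves subrr mul0r.
have dwA := dw_Apol a.
have dwDzzw : dw Dzzw = 0 by rewrite dzzw_Dpol; mderiv_simpl; ring.
have dwDzw : dw Dzw = Dwwz by rewrite /dz /dw !(mderiv_comm vz vw).
(* Generalizing [Apol a] keeps [mderivD] from unfolding it. *)
move: dwA dwDzzw dwDzw; rewrite /dz /dw; move: (Apol a) => A' dwA dwDzzw dwDzw.
rewrite !expr2 !(mderivB, mderivD, mderivM, mderivC, mderiv_nat) dwA dwDzzw dwDzw.
ring.
Qed.

End Identities.

Theorem corollary3p8 (a : coords) : plucker a /\ SIC a <-> cor38_eqs a.
Proof.
have two_c := mulr2_three_halves.
split=> [[/plucker_iff_eqs15 eqs15 [sic1 sic2 _]] | [eqs15 [eq6 eq7]]].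
  have [eAB eADww _ eBDzz _] := eqs15.
  split; first exact: eqs15.
  split.
  - exact/(sic1_iff_eq6 two_c eAB eADww).
  - exact/(sic2_iff_eq7 two_c eAB eBDzz).
have [eAB eADww _ eBDzz _] := eqs15.
split; first exact/plucker_iff_eqs15.
split.
- exact/(sic1_iff_eq6 two_c eAB eADww).
- exact/(sic2_iff_eq7 two_c eAB eBDzz).
- apply: sic3_of_eqs eAB eADww eBDzz _.
  by rewrite -dw_eq6_defect eq6 subrr /dw mderiv0.
Qed.
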